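(* Let $H$ be a connected simple algebraic group over an algebraically closed field of characteristic zero, with center $Z(H)$, and let $H[r]=H\times\cdots\times H$ ($r$ factors). Let $\underline x=(x_1,\dots,x_r)\in H[r]$ be such that $x_i\notin Z(H)$ for all $i$ and $x_ix_j^{-1}\notin Z(H)$ for all $i\ne j$. Let $L_r\subseteq H[r]$ be the smallest closed subgroup containing $\Gamma_r:=\{(\delta x_1\delta^{-1},\dots,\delta x_r\delta^{-1}):\delta\in H\}$. Then $L_r=H[r]$. *)

(* Linear algebraic groups over an algebraically closed field F
   of characteristic 0, realised as Zariski-closed subgroups of GL_n(F). *)
From HB Require Import structures.
From mathcomp Require Import all_boot all_order all_algebra.
Set Implicit Arguments. Unset Strict Implicit. Unset Printing Implicit Defensive.
Import GRing.Theory.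
Local Open Scope ring_scope.

Section AlgGroups.
Variable F : closedFieldType.

Inductive polyfun (I : Type) : ((I -> F) -> F) -> Prop :=
| pf_const (c : F) : polyfun (fun _ => c)
| pf_var (i : I) : polyfun (fun v => v i)
| pf_opp f : polyfun f -> polyfun (fun v => - f v)
| pf_add f g : polyfun f -> polyfun g -> polyfun (fun v => f v + g v)
| pf_mul f g : polyfun f -> polyfun g -> polyfun (fun v => f v * g v).

Definition zclosed (T I : Type) (coord : T -> I -> F) (S : T -> Prop) :=
  exists P : ((I -> F) -> F) -> Prop,
    (forall f, P f -> polyfun f) /\
    (forall x, S x <-> (forall f, P f -> f (coord x) = 0)).

Definition mx_coord n (A : 'M[F]_n) : 'I_n * 'I_n -> F :=
  fun ij => A ij.1 ij.2.

Definition tup_coord r n (x : 'I_r -> 'M[F]_n) : 'I_r * ('I_n * 'I_n) -> F :=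
  fun k => x k.1 k.2.1 k.2.2.

Definition is_mxgroup n (G : 'M[F]_n -> Prop) :=
  [/\ G 1%:M,
      (forall A, G A -> A \in unitmx),
      (forall A B, G A -> G B -> G (A *m B)) &
      (forall A, G A -> G (invmx A))].

(* G is a closed subgroup of GL_n(F), i.e. a linear algebraic group;
   its topology is the subspace (Zariski) topology. *)
Definition closed_mxgroup n (G : 'M[F]_n -> Prop) :=
  is_mxgroup G /\
  exists Z, zclosed (@mx_coord n) Z /\ (forall A, G A <-> Z A /\ A \in unitmx).

Definition zconnected n (G : 'M[F]_n -> Prop) :=
  forall Z1 Z2, zclosed (@mx_coord n) Z1 -> zclosed (@mx_coord n) Z2 ->
    (forall A, G A -> Z1 A \/ Z2 A) ->
    (forall A, G A -> Z1 A -> Z2 A -> False) ->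
    (forall A, G A -> Z1 A) \/ (forall A, G A -> Z2 A).

Definition normal_in n (N H : 'M[F]_n -> Prop) :=
  (forall A, N A -> H A) /\
  (forall h A, H h -> N A -> N (h *m A *m invmx h)).

Definition simple_alg_group n (H : 'M[F]_n -> Prop) :=
  [/\ closed_mxgroup H, zconnected H,
      (exists A B, [/\ H A, H B & A *m B <> B *m A]) &
      (forall N, closed_mxgroup N -> zconnected N -> normal_in N H ->
         (forall A, N A <-> A = 1%:M) \/ (forall A, N A <-> H A))].

Definition center n (H : 'M[F]_n -> Prop) (z : 'M[F]_n) :=
  H z /\ forall h, H h -> z *m h = h *m z.

Definition prodH n r (H : 'M[F]_n -> Prop) (x : 'I_r -> 'M[F]_n) :=
  forall i, H (x i).

Definition closed_subgroup_prod n r (H : 'M[F]_n -> Prop)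
    (K : ('I_r -> 'M[F]_n) -> Prop) :=
  [/\ K (fun _ => 1%:M),
      (forall x y, K x -> K y -> K (fun i => x i *m y i)),
      (forall x, K x -> K (fun i => invmx (x i))) &
      exists Z, zclosed (@tup_coord r n) Z /\
        (forall x, K x <-> Z x /\ prodH H x)].

Definition Gamma n r (H : 'M[F]_n -> Prop) (y : 'I_r -> 'M[F]_n)
    (x : 'I_r -> 'M[F]_n) :=
  exists d, H d /\ forall i, x i = d *m y i *m invmx d.

Definition Lr n r (H : 'M[F]_n -> Prop) (y : 'I_r -> 'M[F]_n)
    (x : 'I_r -> 'M[F]_n) :=
  forall K, closed_subgroup_prod H K -> (forall z, Gamma H y z -> K z) -> K x.

End AlgGroups.

(* Idea (Goursat's lemma for a simple group).  For each factor i the slice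
   N_i = {h | (1,..,h,..,1) in L_r} is a closed subgroup of H normalized by H.
   Starting from x itself, which is non-central in every factor, we shrink the
   set of factors where an element of L_r is non-central down to {i}: if this
   got stuck at a factor j, twisting conjugates of the element by x would show
   that x_j^-1 x_i almost commutes with a whole conjugacy class of H, forcing
   x_i x_j^-1 into the center.  An element w of L_r non-central only at i then
   puts all conjugates of the commutators [g, w_i] into N_i, and in a simple
   group these generate H; so N_i = H for all i and L_r = H[r]. *)

From HB Require Import structures.
From mathcomp Require Import all_boot all_order all_algebra.
From mathcomp Require Import ring fingroup perm.
From Stdlib Require Import FunctionalExtensionality Classical.

Set Implicit Arguments. Unset Strict Implicit. Unset Printing Implicit Defensive.
Import GRing.Theory.
Local Open Scope ring_scope.

Section LinearAlgebraicGroups.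
Variable F : closedFieldType.
Local Notation pf := (@polyfun F).

Section PolynomialFunctions.

Lemma polyfun_ext I (f g : (I -> F) -> F) : pf f -> f =1 g -> pf g.
Proof. by move=> hf e; rewrite -(functional_extensionality _ _ e). Qed.

Lemma polyfun_sum I T (r : seq T) (P : pred T) (f : T -> (I -> F) -> F) :
  (forall t, pf (f t)) -> pf (fun v => \sum_(t <- r | P t) f t v).
Proof.
move=> hf; elim: r => [|a r IH].
  by apply: (polyfun_ext (pf_const _ 0)) => v; rewrite big_nil.
case Pa: (P a).
  by apply: (polyfun_ext (pf_add (hf a) IH)) => v; rewrite big_cons Pa.
by apply: (polyfun_ext IH) => v; rewrite big_cons Pa.
Qed.

Lemma polyfun_prod I T (r : seq T) (P : pred T) (f : T -> (I -> F) -> F) :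
  (forall t, pf (f t)) -> pf (fun v => \prod_(t <- r | P t) f t v).
Proof.
move=> hf; elim: r => [|a r IH].
  by apply: (polyfun_ext (pf_const _ 1)) => v; rewrite big_nil.
case Pa: (P a).
  by apply: (polyfun_ext (pf_mul (hf a) IH)) => v; rewrite big_cons Pa.
by apply: (polyfun_ext IH) => v; rewrite big_cons Pa.
Qed.

Lemma polyfun_exp I (f : (I -> F) -> F) k : pf f -> pf (fun v => f v ^+ k).
Proof.
move=> hf; elim: k => [|k IH].
  by apply: (polyfun_ext (pf_const _ 1)) => v; rewrite expr0.
by apply: (polyfun_ext (pf_mul hf IH)) => v; rewrite exprS.
Qed.

(* Functions t |-> g (c t) / w t ^+ k, with g polynomial and w a polynomial
   weight, are closed under polynomial expressions: this is the calculus of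
   regular functions on the principal open set {w <> 0}. *)
Section Fractions.
Variables (T I J : Type) (c : T -> I -> F) (Q : T -> Prop) (w : T -> F).
Variables (gw : (I -> F) -> F) (phi : T -> J -> F).
Hypothesis gw_poly : pf gw.
Hypothesis w_gw : forall t, w t = gw (c t).
Hypothesis phi_frac : forall j, exists g k,
  pf g /\ forall t, Q t -> w t ^+ k * phi t j = g (c t).

Lemma polyfun_comp_frac f : pf f ->
  exists g k, pf g /\ forall t, Q t -> w t ^+ k * f (phi t) = g (c t).
Proof.
elim.
- move=> c0; exists (fun _ => c0), 0%N; split; first exact: pf_const.
  by move=> t _; rewrite expr0 mul1r.
- exact: phi_frac.
- move=> f0 _ [g [k [hg e]]]; exists (fun v => - g v), k; split; first exact: pf_opp.
  by move=> t Qt; rewrite mulrN e.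
- move=> f1 f2 _ [g1 [k1 [hg1 e1]]] _ [g2 [k2 [hg2 e2]]].
  exists (fun v => gw v ^+ k2 * g1 v + gw v ^+ k1 * g2 v), (k1 + k2)%N; split.
    by apply: pf_add; apply: pf_mul => //; apply: polyfun_exp.
  move=> t Qt; rewrite -e1 // -e2 // -w_gw exprD; ring.
- move=> f1 f2 _ [g1 [k1 [hg1 e1]]] _ [g2 [k2 [hg2 e2]]].
  exists (fun v => g1 v * g2 v), (k1 + k2)%N; split; first exact: pf_mul.
  move=> t Qt; rewrite -e1 // -e2 // exprD; ring.
Qed.

Lemma zclosed_preimage_frac T' (c' : T' -> J -> F) (psi : T -> T') Z :
  (forall t, Q t -> w t != 0) -> (forall t j, c' (psi t) j = phi t j) ->
  zclosed c' Z -> exists Z', zclosed c Z' /\ forall t, Q t -> (Z (psi t) <-> Z' t).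
Proof.
move=> w_nz c'E [P [hP hZ]].
pose P' g := exists f k, [/\ P f, pf g &
   forall t, Q t -> w t ^+ k * f (c' (psi t)) = g (c t)].
exists (fun t => forall g, P' g -> g (c t) = 0); split.
  by exists P'; split => // g [f [k [_ hg _]]].
move=> t Qt; rewrite hZ; split.
  by move=> h g [f [k [Pf _ e]]]; rewrite -e // h // mulr0.
move=> h f Pf.
have [g [k [hg e]]] := polyfun_comp_frac (hP f Pf).
have e' : forall t, Q t -> w t ^+ k * f (c' (psi t)) = g (c t).
  move=> s Qs; rewrite -e //; congr (_ * f _).
  by apply: functional_extensionality => j; exact: c'E.
have /eqP := h g (ex_intro _ f (ex_intro _ k (And3 Pf hg e'))).
by rewrite -e' // mulf_eq0 expf_eq0 (negbTE (w_nz t Qt)) andbF => /eqP.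
Qed.

End Fractions.

Lemma zclosed_preimage T I T' J (c : T -> I -> F) (c' : T' -> J -> F)
  (psi : T -> T') Z :
  (forall j, exists g, pf g /\ forall t, c' (psi t) j = g (c t)) ->
  zclosed c' Z -> exists Z', zclosed c Z' /\ forall t, Z (psi t) <-> Z' t.
Proof.
move=> psi_poly hZ.
have frac j : exists g k, pf g /\ forall t, True -> 1 ^+ k * c' (psi t) j = g (c t).
  have [g [hg e]] := psi_poly j; exists g, 0%N; split => // t _.
  by rewrite expr0 mul1r e.
have [Z' [hZ' e]] := zclosed_preimage_frac (pf_const _ 1) (fun _ => erefl) frac
  (c' := c') (psi := psi) (fun _ _ => oner_neq0 F) (fun _ _ => erefl) hZ.
by exists Z'; split => // t; apply: e.
Qed.

Lemma zclosed_bigcap T I (c : T -> I -> F) (A : Type) (Zs : A -> T -> Prop) :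
  (forall a, zclosed c (Zs a)) -> zclosed c (fun t => forall a, Zs a t).
Proof.
move=> hZ.
pose P f := exists a Pa, [/\ (forall f, Pa f -> pf f),
   (forall t, Zs a t <-> (forall f, Pa f -> f (c t) = 0)) & Pa f].
exists P; split; first by move=> f [a [Pa [h _ Pf]]]; exact: h.
move=> t; split.
  by move=> h f [a [Pa [_ e Pf]]]; move: (h a); rewrite e => /(_ f Pf).
move=> h a; have [Pa [h1 e]] := hZ a; rewrite e => f Pf.
by apply: h; exists a, Pa; split.
Qed.

Lemma zclosed_and T I (c : T -> I -> F) (Z1 Z2 : T -> Prop) :
  zclosed c Z1 -> zclosed c Z2 -> zclosed c (fun t => Z1 t /\ Z2 t).
Proof.
move=> h1 h2; have [[]//|P [hP e]] := @zclosed_bigcap T I c bool (fun b => if b then Z1 else Z2).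
exists P; split => // t; rewrite -e.
by split=> [[? ?] []|h] //; split; [exact: (h true)|exact: (h false)].
Qed.

Lemma zclosed_zeros T I (c : T -> I -> F) (A : Type) (e : A -> (I -> F) -> F) :
  (forall a, pf (e a)) -> zclosed c (fun t => forall a, e a (c t) = 0).
Proof.
move=> he; exists (fun f => exists a, f = e a); split; first by move=> f [a ->].
by move=> t; split=> [h f [a ->]|h a] //; apply: h; exists a.
Qed.

Lemma zclosed_setT T I (c : T -> I -> F) : zclosed c (fun _ => True).
Proof. by exists (fun _ => False); split. Qed.

End PolynomialFunctions.

Section RegularFunctions.
Variable n : nat.
Local Notation M := ('M[F]_n).

Lemma invmxM (A B : M) : A \in unitmx -> B \in unitmx ->
  invmx (A *m B) = invmx B *m invmx A.
Proof.
move=> uA uB; have uAB : A *m B \in unitmx by rewrite unitmx_mul uA.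
rewrite -[RHS]mulmx1 -(mulmxV uAB) !mulmxA -(mulmxA _ _ A) mulVmx // mulmx1.
by rewrite mulVmx // mul1mx.
Qed.

Definition polymap (e : M -> F) := exists g, pf g /\ forall A, e A = g (mx_coord A).

Definition regular (e : M -> F) := exists g k, pf g /\
  forall A, A \in unitmx -> \det A ^+ k * e A = g (mx_coord A).

Lemma polymap_det m (Mf : M -> 'M[F]_m) :
  (forall a b, polymap (fun A => Mf A a b)) -> polymap (fun A => \det (Mf A)).
Proof.
move=> hM.
pose f (v : 'I_m * 'I_m -> F) := \sum_(s : 'S_m) (-1) ^+ s * \prod_i v (i, s i).
have hf : pf f.
  apply: polyfun_sum => s; apply: pf_mul; first exact: pf_const.
  by apply: polyfun_prod => i; apply: pf_var.
have frac ab : exists g k, pf g /\ forall A, True ->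
    1 ^+ k * @mx_coord F m (Mf A) ab = g (mx_coord A).
  have [g [hg e]] := hM ab.1 ab.2; exists g, 0%N; split => // A _.
  by rewrite expr0 mul1r /mx_coord e.
have [g [k [hg e]]] := polyfun_comp_frac (pf_const _ 1) (fun _ => erefl) frac hf.
by exists g; split => // A; rewrite -e // expr1n mul1r.
Qed.

Lemma polymap_det_id : polymap (fun A => \det A).
Proof.
by apply: (@polymap_det n id) => a b; exists (fun v => v (a, b)); split => //; apply: pf_var.
Qed.

Lemma regular_ext (e e' : M -> F) :
  (forall A, A \in unitmx -> e A = e' A) -> regular e -> regular e'.
Proof. by move=> h [g [k [hg E]]]; exists g, k; split => // A uA; rewrite -h ?E. Qed.

Lemma regular_comp J (phi : M -> J -> F) f :
  (forall j, regular (fun A => phi A j)) -> pf f -> regular (fun A => f (phi A)).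
Proof.
move=> hphi hf; have [gd [hgd ed]] := polymap_det_id.
exact: (@polyfun_comp_frac _ _ _ (@mx_coord F n) (fun A => A \in unitmx) _ gd phi hgd ed hphi _ hf).
Qed.

Lemma regular_const c : regular (fun _ => c).
Proof.
by exists (fun _ => c), 0%N; split; [exact: pf_const| move=> A _; rewrite expr0 mul1r].
Qed.

Lemma regular_entry i j : regular (fun A => A i j).
Proof.
exists (fun v => v (i, j)), 0%N; split; first exact: pf_var.
by move=> A _; rewrite expr0 mul1r.
Qed.

Lemma regular_add e1 e2 : regular e1 -> regular e2 -> regular (fun A => e1 A + e2 A).
Proof.
move=> h1 h2; apply: (@regular_comp bool (fun A b => if b then e1 A else e2 A)
  (fun v => v true + v false)); first by case.
exact: pf_add (pf_var _ true) (pf_var _ false).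
Qed.

Lemma regular_mul e1 e2 : regular e1 -> regular e2 -> regular (fun A => e1 A * e2 A).
Proof.
move=> h1 h2; apply: (@regular_comp bool (fun A b => if b then e1 A else e2 A)
  (fun v => v true * v false)); first by case.
exact: pf_mul (pf_var _ true) (pf_var _ false).
Qed.

Lemma regular_opp e : regular e -> regular (fun A => - e A).
Proof.
move=> h; apply: (@regular_comp unit (fun A _ => e A) (fun v => - v tt)) => //.
exact: pf_opp (pf_var _ tt).
Qed.

Lemma regular_sum T (r : seq T) (P : pred T) (e : T -> M -> F) :
  (forall t, regular (e t)) -> regular (fun A => \sum_(t <- r | P t) e t A).
Proof.
move=> h; apply: (@regular_comp T (fun A t => e t A) (fun v => \sum_(t <- r | P t) v t)) => //.
exact: (polyfun_sum r P (fun t => pf_var _ t)).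
Qed.

(* Cramer's rule: the entries of the inverse are regular. *)
Lemma regular_inv_entry i j : regular (fun A => invmx A i j).
Proof.
have [g [hg e]] : polymap (fun A => (-1) ^+ (j + i) * \det (row' j (col' i A))).
  have [g [hg e]] : polymap (fun A => \det (row' j (col' i A))).
    apply: polymap_det => a b; exists (fun v => v (lift j a, lift i b)).
    by split; [exact: pf_var|move=> A; rewrite !mxE].
  exists (fun v => (-1) ^+ (j + i) * g v); split; last by move=> A; rewrite e.
  by apply: pf_mul => //; apply: pf_const.
exists g, 1%N; split => // A uA.
by rewrite /invmx uA mxE [X in _ * (_ * X)]mxE /cofactor -e expr1 mulrA mulrV ?mul1r.
Qed.

Definition regular_mx (Mf : M -> M) := forall i j, regular (fun A => Mf A i j).

Lemma regular_mx_id : regular_mx id.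
Proof. by move=> i j; exact: regular_entry. Qed.

Lemma regular_mx_const C : regular_mx (fun _ => C).
Proof. by move=> i j; exact: regular_const. Qed.

Lemma regular_mx_inv : regular_mx (fun A => invmx A).
Proof. by move=> i j; exact: regular_inv_entry. Qed.

Lemma regular_mx_mul M1 M2 :
  regular_mx M1 -> regular_mx M2 -> regular_mx (fun A => M1 A *m M2 A).
Proof.
move=> h1 h2 i j; apply: (regular_ext (e := fun A => \sum_k M1 A i k * M2 A k j)).
  by move=> A _; rewrite mxE.
by apply: regular_sum => k; apply: regular_mul.
Qed.

Lemma regular_mx_sub M1 M2 :
  regular_mx M1 -> regular_mx M2 -> regular_mx (fun A => M1 A - M2 A).
Proof.
move=> h1 h2 i j; apply: (regular_ext (e := fun A => M1 A i j + - M2 A i j)).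
  by move=> A _; rewrite !mxE.
by apply: regular_add => //; apply: regular_opp.
Qed.

Lemma regular_mx_ext (M1 M2 : M -> M) :
  (forall A, A \in unitmx -> M1 A = M2 A) -> regular_mx M1 -> regular_mx M2.
Proof. by move=> e h i j; apply: (regular_ext (e := fun A => M1 A i j)) => // A uA; rewrite e. Qed.

Lemma regular_mx_preimage (Mf : M -> M) (Z : M -> Prop) : regular_mx Mf ->
  zclosed (@mx_coord F n) Z -> exists Z', zclosed (@mx_coord F n) Z' /\
    forall A, A \in unitmx -> (Z (Mf A) <-> Z' A).
Proof.
move=> hM; have [gd [hgd ed]] := polymap_det_id.
apply: (@zclosed_preimage_frac _ _ _ (@mx_coord F n) (fun A => A \in unitmx)
  (fun A => \det A) gd (fun A ij => Mf A ij.1 ij.2) hgd ed _ _ (@mx_coord F n) Mf) => //.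
- by move=> [i j]; apply: hM.
- by move=> A; rewrite unitmxE unitfE.
Qed.

End RegularFunctions.

Ltac regular_mx_auto := repeat first
  [apply: regular_mx_id | apply: regular_mx_inv | apply: regular_mx_const
  | apply: regular_mx_mul].

Section Connectedness.
Variable n : nat.
Local Notation M := ('M[F]_n).
Local Notation zcl := (zclosed (@mx_coord F n)).

Lemma zconnected_ext (X X' : M -> Prop) : (forall A, X A <-> X' A) ->
  zconnected X -> zconnected X'.
Proof.
move=> e hX Z1 Z2 c1 c2 cov dis.
have [h|h] := hX Z1 Z2 c1 c2 (fun A hA => cov A ((e A).1 hA))
  (fun A hA => dis A ((e A).1 hA)).
  by left => A /e; apply: h.
by right => A /e; apply: h.
Qed.

Lemma zconnected_clopen (X Z1 Z2 : M -> Prop) : zconnected X -> zcl Z1 -> zcl Z2 ->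
  (forall A, X A -> Z1 A \/ Z2 A) -> (forall A, X A -> Z1 A -> Z2 A -> False) ->
  forall p, X p -> Z1 p -> forall A, X A -> Z1 A.
Proof.
move=> hX c1 c2 cov dis p Xp Z1p.
have [//|h] := hX Z1 Z2 c1 c2 cov dis.
by case: (dis p Xp Z1p (h p Xp)).
Qed.

Lemma zconnected_union (A : Type) (a0 : A) (Xs : A -> M -> Prop) p :
  (forall a, zconnected (Xs a)) -> (forall a, Xs a p) ->
  zconnected (fun B => exists a, Xs a B).
Proof.
move=> hc hp Z1 Z2 c1 c2 cov dis.
have [h|h] := cov p (ex_intro _ a0 (hp a0)); [left|right] => B [a hB].
  apply: (zconnected_clopen (hc a) c1 c2 _ _ (hp a) h) => //.
    by move=> C hC; apply: cov; exists a.
  by move=> C hC; apply: dis; exists a.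
apply: (zconnected_clopen (hc a) c2 c1 _ _ (hp a) h) => //.
  by move=> C hC; rewrite or_comm; apply: cov; exists a.
by move=> C hC h1 h2; apply: (dis C _ h2 h1); exists a.
Qed.

Lemma zconnected_image (X : M -> Prop) (Mf : M -> M) :
  (forall A, X A -> A \in unitmx) -> regular_mx Mf -> zconnected X ->
  zconnected (fun B => exists A, X A /\ B = Mf A).
Proof.
move=> hu hM hX Z1 Z2 c1 c2 cov dis.
have [Z1' [c1' e1]] := regular_mx_preimage hM c1.
have [Z2' [c2' e2]] := regular_mx_preimage hM c2.
have cov' A : X A -> Z1' A \/ Z2' A.
  move=> XA; have [h|h] := cov (Mf A) (ex_intro _ A (conj XA erefl)).
    by left; rewrite -e1 ?hu.
  by right; rewrite -e2 ?hu.
have dis' A : X A -> Z1' A -> Z2' A -> False.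
  by move=> XA; rewrite -e1 ?hu // -e2 ?hu //; apply: dis; exists A.
have [h|h] := hX Z1' Z2' c1' c2' cov' dis'.
- by left => B [A [XA ->]]; rewrite e1 ?hu //; apply: h.
- by right => B [A [XA ->]]; rewrite e2 ?hu //; apply: h.
Qed.

End Connectedness.

Section RelativelyClosed.
Variable n : nat.
Local Notation M := ('M[F]_n).

Definition rclosed (S : M -> Prop) := exists Z, zclosed (@mx_coord F n) Z /\
  forall A, A \in unitmx -> (S A <-> Z A).

Lemma rclosed_ext S S' :
  (forall A, A \in unitmx -> (S A <-> S' A)) -> rclosed S -> rclosed S'.
Proof. by move=> e [Z [hZ e']]; exists Z; split => // A uA; rewrite -e // e'. Qed.

Lemma rclosed_bigcap (T : Type) (Ss : T -> M -> Prop) :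
  (forall t, rclosed (Ss t)) -> rclosed (fun A => forall t, Ss t A).
Proof.
move=> h.
pose Idx := {p : T * (M -> Prop) | zclosed (@mx_coord F n) p.2 /\
  forall A, A \in unitmx -> (Ss p.1 A <-> p.2 A)}.
exists (fun A => forall s : Idx, (sval s).2 A); split.
  apply: (@zclosed_bigcap _ _ _ Idx (fun s => (sval s).2)).
  by move=> s; exact: (proj1 (proj2_sig s)).
move=> A uA; split.
  by move=> hA [[t Z] [hZ e]] /=; apply/e => //; apply: hA.
move=> hA t; have [Z [hZ e]] := h t; rewrite e //.
exact: (hA (exist _ (t, Z) (conj hZ e))).
Qed.

Lemma rclosed_and S1 S2 : rclosed S1 -> rclosed S2 -> rclosed (fun A => S1 A /\ S2 A).
Proof.
move=> [Z1 [h1 e1]] [Z2 [h2 e2]]; exists (fun A => Z1 A /\ Z2 A).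
by split; [exact: zclosed_and|move=> A uA; rewrite e1 // e2].
Qed.

Lemma rclosed_preimage (Mf : M -> M) S : regular_mx Mf ->
  (forall A, A \in unitmx -> Mf A \in unitmx) -> rclosed S -> rclosed (fun A => S (Mf A)).
Proof.
move=> hM hu [Z [hZ e]]; have [Z' [hZ' e']] := regular_mx_preimage hM hZ.
by exists Z'; split => // A uA; rewrite e ?hu // e'.
Qed.

Lemma rclosed_zero (Mf : M -> M) : regular_mx Mf -> rclosed (fun A => Mf A = 0).
Proof.
move=> hM; have [Z' [hZ' e']] := regular_mx_preimage hM
  (@zclosed_zeros _ _ (@mx_coord F n) _ (fun ij v => v ij) (fun ij => pf_var _ ij)).
exists Z'; split => // A uA; rewrite -e' //; split.
  by move=> -> [i j]; rewrite /mx_coord mxE.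
by move=> h; apply/matrixP => i j; rewrite mxE; exact: (h (i, j)).
Qed.

Lemma closed_mxgroupP G : is_mxgroup G -> rclosed G -> closed_mxgroup G.
Proof.
move=> hG [Z [hZ e]]; split => //; exists Z; split => // A.
case: hG => _ hu _ _; split; first by move=> hA; rewrite -e ?hu.
by move=> [hA uA]; rewrite e.
Qed.

Lemma closed_mxgroup_rclosed G : closed_mxgroup G -> rclosed G.
Proof. by move=> [_ [Z [hZ e]]]; exists Z; split => // A uA; rewrite e; tauto. Qed.

Definition centralizes (S : M -> Prop) (A : M) :=
  A \in unitmx /\ forall s, S s -> A *m s = s *m A.

(* It is a closed subgroup: commuting with s is a polynomial condition. *)
Lemma centralizer_closed S : closed_mxgroup (centralizes S).
Proof.
apply: closed_mxgroupP.
  split.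
  - by split; [exact: unitmx1|move=> s _; rewrite mul1mx mulmx1].
  - by move=> A [].
  - move=> A B [uA eA] [uB eB]; split; first by rewrite unitmx_mul uA.
    by move=> s hs; rewrite -mulmxA eB // (mulmxA A) eA // -mulmxA.
  - move=> A [uA eA]; split; first by rewrite unitmx_inv.
    by move=> s hs; rewrite -[LHS](mulmxK uA) -(mulmxA (invmx A)) -eA // mulKmx.
apply: (rclosed_ext (S := fun A => forall s : {s | S s}, A *m sval s - sval s *m A = 0)).
  move=> A uA; split=> [h|[_ h] [s hs] /=].
    by split => // s hs; apply/eqP; rewrite -subr_eq0; apply/eqP; exact: (h (exist _ s hs)).
  by apply/eqP; rewrite subr_eq0; apply/eqP; exact: h.
apply: rclosed_bigcap => -[s hs] /=; apply: rclosed_zero.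
by apply: regular_mx_sub; regular_mx_auto.
Qed.

End RelativelyClosed.

Section GeneratedSubgroup.
Variable n : nat.
Local Notation M := ('M[F]_n).
Local Notation zcl := (zclosed (@mx_coord F n)).
Variable X : M -> Prop.
Hypothesis X_unit : forall A, X A -> A \in unitmx.

Definition letter A := X A \/ exists B, X B /\ A = invmx B.

Fixpoint word k : M -> Prop :=
  match k with
  | 0 => fun A => A = 1%:M
  | k.+1 => fun A => exists y w, [/\ letter y, word k w & A = y *m w]
  end.

Definition gen A := exists k, word k A.

Definition gen_closure A := A \in unitmx /\
  forall Z, zcl Z -> (forall B, gen B -> Z B) -> Z A.

Lemma letter_unit A : letter A -> A \in unitmx.
Proof. by case=> [/X_unit//|[B [/X_unit uB ->]]]; rewrite unitmx_inv. Qed.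

Lemma letter_inv y : letter y -> letter (invmx y).
Proof. by case=> [hy|[B [hB ->]]]; [right; exists y|left; rewrite invmxK]. Qed.

Lemma word_unit k A : word k A -> A \in unitmx.
Proof.
elim: k A => [A ->|k IH A [y [w [hy hw ->]]]]; first exact: unitmx1.
by rewrite unitmx_mul (letter_unit hy) (IH _ hw).
Qed.

Lemma word_mul k m a b : word k a -> word m b -> word (k + m) (a *m b).
Proof.
elim: k a => [a ->|k IH a [y [w [hy hw ->]]]] hb; first by rewrite mul1mx.
by exists y, (w *m b); split => //; [exact: IH|rewrite mulmxA].
Qed.

Lemma word_inv k a : word k a -> word k (invmx a).
Proof.
elim: k a => [a ->|k IH a [y [w [hy hw ->]]]]; first by rewrite invmx1.
rewrite invmxM ?(letter_unit hy) ?(word_unit hw) // -addn1.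
apply: word_mul; first exact: IH.
by exists (invmx y), 1%:M; split => //; [exact: letter_inv|rewrite mulmx1].
Qed.

Lemma gen_unit A : gen A -> A \in unitmx.
Proof. by case=> k /word_unit. Qed.

Lemma gen1 : gen 1%:M.
Proof. by exists 0%N. Qed.

Lemma gen_mul a b : gen a -> gen b -> gen (a *m b).
Proof. by move=> [k ha] [m hb]; exists (k + m)%N; apply: word_mul. Qed.

Lemma gen_inv a : gen a -> gen (invmx a).
Proof. by move=> [k ha]; exists k; apply: word_inv. Qed.

Lemma letter_gen A : letter A -> gen A.
Proof. by move=> hA; exists 1%N, A, 1%:M; split => //; rewrite mulmx1. Qed.

Lemma gen_in_closure A : gen A -> gen_closure A.
Proof. by move=> hA; split; [exact: gen_unit|move=> Z _ h; exact: h]. Qed.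

Lemma X_in_closure A : X A -> gen_closure A.
Proof. by move=> hA; apply/gen_in_closure/letter_gen; left. Qed.

(* A regular map of GL_n sending gen into gen_closure maps gen_closure into
   itself, since preimages of closed sets are closed. *)
Lemma gen_closure_map (f : M -> M) : regular_mx f ->
  (forall B, B \in unitmx -> f B \in unitmx) ->
  (forall B, gen B -> gen_closure (f B)) -> forall A, gen_closure A -> gen_closure (f A).
Proof.
move=> hf uf hgen A [uA hA]; split=> [|Z hZ hGZ]; first exact: uf.
have [Z' [hZ' e]] := regular_mx_preimage hf hZ.
rewrite e //; apply: hA => // B hB; rewrite -e ?gen_unit //.
by have [_] := hgen B hB; apply.
Qed.

Lemma gen_closure_zclosed : exists Z, zcl Z /\
  forall A, gen_closure A <-> Z A /\ A \in unitmx.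
Proof.
pose Idx := {Z : M -> Prop | zcl Z /\ forall B, gen B -> Z B}.
exists (fun A => forall s : Idx, sval s A); split.
  by apply: (@zclosed_bigcap _ _ _ Idx sval) => s; exact: (proj1 (proj2_sig s)).
move=> A; split; first by move=> [uA h]; split => // -[Z [hZ hG]] /=; apply: h.
move=> [h uA]; split => // Z hZ hG.
exact: (h (exist _ Z (conj hZ hG))).
Qed.

(* gen_closure is a closed subgroup, obtained by extending the group laws of
   gen to its closure via gen_closure_map. *)
Lemma gen_closure_mul a b : gen_closure a -> gen_closure b -> gen_closure (a *m b).
Proof.
have unit_mul c B : c \in unitmx -> B \in unitmx -> B *m c \in unitmx.
  by move=> uc uB; rewrite unitmx_mul uB.
move=> ha [ub hb]; apply: (@gen_closure_map (fun B => B *m b)) => //.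
- by apply: regular_mx_mul; regular_mx_auto.
- by move=> B; apply: unit_mul.
move=> B hB; apply: (@gen_closure_map (fun C => B *m C)) => //.
- by apply: regular_mx_mul; regular_mx_auto.
- by move=> C uC; rewrite unitmx_mul uC gen_unit.
by move=> C hC; apply/gen_in_closure/gen_mul.
Qed.

Lemma gen_closure_inv a : gen_closure a -> gen_closure (invmx a).
Proof.
apply: gen_closure_map; first exact: regular_mx_inv.
  by move=> B; rewrite unitmx_inv.
by move=> B hB; apply/gen_in_closure/gen_inv.
Qed.

Lemma gen_closure_group : closed_mxgroup gen_closure.
Proof.
split; last by have [Z [hZ e]] := gen_closure_zclosed; exists Z.
split; [exact: gen_in_closure gen1|by move=> A []|exact: gen_closure_mul|].
exact: gen_closure_inv.
Qed.

Lemma gen_closure_min (K : M -> Prop) : closed_mxgroup K -> (forall A, X A -> K A) ->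
  forall A, gen_closure A -> K A.
Proof.
move=> [[K1 Ku KM KV] [Z [hZ e]]] hXK.
have hletter y : letter y -> K y by case=> [/hXK//|[B [/hXK hB ->]]]; apply: KV.
have hword k w : word k w -> K w.
  elim: k w => [w ->//|k IH w [y [w' [hy hw ->]]]].
  by apply: KM; [exact: hletter|exact: IH hw].
move=> A [uA hA]; apply/e; split => //; apply: hA => // B [k hB].
by have /e[] := hword _ _ hB.
Qed.

Lemma gen_closure_conj h : h \in unitmx ->
  (forall A, X A -> X (h *m A *m invmx h)) ->
  forall A, gen_closure A -> gen_closure (h *m A *m invmx h).
Proof.
move=> uh hXh.
have hletter y : letter y -> letter (h *m y *m invmx h).
  case=> [hy|[B [hB ->]]]; first by left; apply: hXh.
  right; exists (h *m B *m invmx h); split; first exact: hXh.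
  have uB := X_unit hB.
  by rewrite !invmxM ?unitmx_mul ?unitmx_inv ?uh ?uB // invmxK mulmxA.
have hword k w : word k w -> word k (h *m w *m invmx h).
  elim: k w => [w ->|k IH w [y [w' [hy hw ->]]]]; first by rewrite mulmx1 mulmxV.
  exists (h *m y *m invmx h), (h *m w' *m invmx h).
  by split; [exact: hletter|exact: IH|rewrite !mulmxA mulmxKV].
apply: gen_closure_map.
- by apply: regular_mx_mul; regular_mx_auto.
- by move=> B uB; rewrite !unitmx_mul uB uh unitmx_inv uh.
by move=> B [k hB]; apply: gen_in_closure; exists k; apply: hword.
Qed.

Hypothesis X1 : X 1%:M.
Hypothesis X_connected : zconnected X.

(* X u X^-1 is connected, as the union of two connected sets through 1. *)
Lemma letter_connected : zconnected letter.
Proof.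
pose Xs (b : bool) := if b then X else (fun B => exists A, X A /\ B = invmx A).
apply: (@zconnected_ext _ (fun A => exists b, Xs b A)).
  move=> A; split; first by case=> [[]] h; [left|right; case: h => B [h1 h2]; exists B].
  by case=> h; [exists true|exists false; case: h => B [h1 h2]; exists B].
apply: (@zconnected_union _ _ true Xs 1%:M).
- by case => //; apply: zconnected_image => //; exact: regular_mx_inv.
- by case => //; exists 1%:M; rewrite invmx1.
Qed.

(* gen_closure is connected: by induction on word length, each word lies in
   the connected set  letter * w'  which meets the component of 1. *)
Lemma gen_closure_connected : zconnected gen_closure.
Proof.
suff side Z1 Z2 : zcl Z1 -> zcl Z2 ->
    (forall A, gen_closure A -> Z1 A \/ Z2 A) ->
    (forall A, gen_closure A -> Z1 A -> Z2 A -> False) ->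
    Z1 1%:M -> forall A, gen_closure A -> Z1 A.
  move=> Z1 Z2 c1 c2 cov dis.
  have [h|h] := cov _ (gen_in_closure gen1); first by left; exact: (side Z1 Z2).
  right; apply: (side Z2 Z1) => // [A hA|A hA h1 h2]; first by rewrite or_comm; apply: cov.
  exact: (dis A hA h2 h1).
move=> c1 c2 cov dis Z11.
have hword k w : word k w -> Z1 w.
  elim: k w => [w ->//|k IH w [y [w' [hy hw ->]]]].
  have hc : zconnected (fun B => exists A, letter A /\ B = A *m w').
    apply: zconnected_image; [exact: letter_unit| |exact: letter_connected].
    by apply: regular_mx_mul; regular_mx_auto.
  have inc B : (exists A, letter A /\ B = A *m w') -> gen_closure B.
    by move=> [A [hA ->]]; apply/gen_in_closure/gen_mul; [apply: letter_gen|exists k].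
  apply: (zconnected_clopen hc c1 c2 _ _ (p := w')).
  - by move=> B /inc; apply: cov.
  - by move=> B /inc; apply: dis.
  - by exists 1%:M; split; [left|rewrite mul1mx].
  - exact: IH.
  - by exists y.
by move=> A [_ hA]; apply: hA => // B [k hB]; exact: hword hB.
Qed.

End GeneratedSubgroup.

Section ConjugationCommutator.
Variable n : nat.
Local Notation M := ('M[F]_n).

Definition mxconj (h A : M) := h *m A *m invmx h.
Definition mxcomm (a b : M) := a *m b *m invmx a *m invmx b.

Lemma mxconj_mul h A B : h \in unitmx -> mxconj h (A *m B) = mxconj h A *m mxconj h B.
Proof. by move=> uh; rewrite /mxconj !mulmxA mulmxKV. Qed.

Lemma mxconj_unit h A : h \in unitmx -> (mxconj h A \in unitmx) = (A \in unitmx).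
Proof. by move=> uh; rewrite /mxconj !unitmx_mul unitmx_inv uh andbT. Qed.

Lemma mxconj_inv h A : h \in unitmx -> A \in unitmx ->
  mxconj h (invmx A) = invmx (mxconj h A).
Proof.
move=> uh uA; rewrite /mxconj !invmxM ?unitmx_mul ?unitmx_inv ?uh ?uA //.
by rewrite invmxK mulmxA.
Qed.

Lemma mxconj_comp h k A : h \in unitmx -> k \in unitmx ->
  mxconj h (mxconj k A) = mxconj (h *m k) A.
Proof. by move=> uh uk; rewrite /mxconj invmxM // !mulmxA. Qed.

Lemma mxconj1 A : mxconj 1%:M A = A.
Proof. by rewrite /mxconj invmx1 mul1mx mulmx1. Qed.

Lemma mxconj_id h : h \in unitmx -> mxconj h 1%:M = 1%:M.
Proof. by move=> uh; rewrite /mxconj mulmx1 mulmxV. Qed.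

Lemma mxconjK h A : h \in unitmx -> mxconj (invmx h) (mxconj h A) = A.
Proof. by move=> uh; rewrite mxconj_comp ?unitmx_inv // mulVmx // mxconj1. Qed.

Lemma mxconj_comm h z : h \in unitmx -> z *m h = h *m z -> mxconj h z = z.
Proof. by move=> uh e; rewrite /mxconj -e mulmxK. Qed.

Lemma mxconj_mxcomm h a b : h \in unitmx -> a \in unitmx -> b \in unitmx ->
  mxconj h (mxcomm a b) = mxcomm (mxconj h a) (mxconj h b).
Proof. by move=> uh ua ub; rewrite /mxcomm !mxconj_mul ?mxconj_inv. Qed.

Lemma mxcomm_unit a b : a \in unitmx -> b \in unitmx -> mxcomm a b \in unitmx.
Proof. by move=> ua ub; rewrite /mxcomm !unitmx_mul !unitmx_inv ua ub. Qed.

Lemma mxcomm_eq1 a b : a \in unitmx -> b \in unitmx ->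
  mxcomm a b = 1%:M -> a *m b = b *m a.
Proof.
move=> ua ub e; have : mxcomm a b *m b *m a = b *m a by rewrite e mul1mx.
by rewrite /mxcomm mulmxKV // mulmxKV.
Qed.

Lemma mxcomm1 a b : a \in unitmx -> b \in unitmx -> a *m b = b *m a -> mxcomm a b = 1%:M.
Proof. by move=> ua ub e; rewrite /mxcomm e mulmxK // mulmxV. Qed.

Lemma mxcomm_mulE (a b Y : M) : a \in unitmx -> b \in unitmx -> Y \in unitmx ->
  mxcomm (a *m b) Y = mxconj a (mxcomm b Y) *m mxcomm a Y.
Proof.
move=> ua ub uY; rewrite /mxcomm /mxconj invmxM // !mulmxA.
by rewrite (mulmxKV ua) (mulmxKV uY).
Qed.

Lemma mxcomm_invE (a Y : M) : a \in unitmx -> Y \in unitmx ->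
  mxcomm (invmx a) Y = mxconj (invmx a) (invmx (mxcomm a Y)).
Proof.
move=> ua uY; rewrite /mxcomm /mxconj !invmxM ?unitmx_mul ?unitmx_inv ?ua ?uY //.
by rewrite !invmxK !mulmxA (mulmxKV ua).
Qed.

End ConjugationCommutator.

Section SimpleGroup.
Variable n : nat.
Local Notation M := ('M[F]_n).
Variable H : M -> Prop.
Hypothesis hH : simple_alg_group H.

Lemma H_group : closed_mxgroup H. Proof. by case: hH. Qed.
Lemma H1 : H 1%:M. Proof. by case: H_group => -[]. Qed.
Lemma H_unit A : H A -> A \in unitmx. Proof. by case: H_group => -[_ hu _ _] _; apply: hu. Qed.
Lemma H_mul A B : H A -> H B -> H (A *m B). Proof. by case: H_group => -[_ _ hm _] _; apply: hm. Qed.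
Lemma H_inv A : H A -> H (invmx A). Proof. by case: H_group => -[_ _ _ hv] _; apply: hv. Qed.
Lemma H_connected : zconnected H. Proof. by case: hH. Qed.
Lemma H_simple N : closed_mxgroup N -> zconnected N -> normal_in N H ->
  (forall A, N A <-> A = 1%:M) \/ (forall A, N A <-> H A).
Proof. by case: hH => _ _ _; apply. Qed.

Lemma H_conj h A : H h -> H A -> H (mxconj h A).
Proof. by move=> hh hA; apply: H_mul; [apply: H_mul|apply: H_inv]. Qed.

Lemma H_comm a b : H a -> H b -> H (mxcomm a b).
Proof. by move=> ha hb; do 3?apply: H_mul; rewrite ?invmxK //; apply: H_inv. Qed.

Lemma center_in z : center H z -> H z. Proof. by case. Qed.

Lemma center_conj_fixed h z : H h -> center H z -> mxconj h z = z.
Proof. by move=> hh [hz e]; apply: mxconj_comm; [exact: H_unit|exact: e]. Qed.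

Lemma center_conj h z : H h -> center H z -> center H (mxconj h z).
Proof. by move=> hh hz; rewrite center_conj_fixed. Qed.

Lemma center1 : center H 1%:M.
Proof. by split; [exact: H1|move=> h _; rewrite mul1mx mulmx1]. Qed.

Lemma center_mul a b : center H a -> center H b -> center H (a *m b).
Proof.
move=> [ha ea] [hb eb]; split; first exact: H_mul.
by move=> h hh; rewrite -mulmxA eb // !mulmxA ea.
Qed.

Lemma center_inv a : center H a -> center H (invmx a).
Proof.
move=> [ha ea]; split=> [|h hh]; first exact: H_inv.
have ua := H_unit ha.
by rewrite -[LHS](mulmxK ua) -(mulmxA (invmx a) h a) -ea // mulKmx.
Qed.

(* Z(H) = H /\ C(H) is a closed subgroup. *)
Lemma center_closed : closed_mxgroup (center H).
Proof.
apply: closed_mxgroupP.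
  split; [exact: center1|by move=> A /center_in/H_unit|exact: center_mul|exact: center_inv].
apply: (rclosed_ext (S := fun A => H A /\ centralizes H A)).
  by move=> A uA; split=> [[hA [_ e]]|[hA e]].
apply: rclosed_and; apply: closed_mxgroup_rclosed; [exact: H_group|exact: centralizer_closed].
Qed.

(* A connected set of central elements containing 1 is trivial: the closed
   subgroup it generates is a connected closed normal subgroup, hence {1} or
   H, and H is not commutative. *)
Lemma center_connected_trivial (X : M -> Prop) : (forall A, X A -> center H A) ->
  X 1%:M -> zconnected X -> forall A, X A -> A = 1%:M.
Proof.
move=> XZ X1 Xc.
have X_unit A : X A -> A \in unitmx by move/XZ/center_in/H_unit.
have clZ := gen_closure_min center_closed XZ.
have hnorm : normal_in (gen_closure X) H.
  split=> [A /clZ/center_in //|h A hh hA].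
  by rewrite -/(mxconj h A) center_conj_fixed //; apply: clZ.
have [h|h] := H_simple (gen_closure_group X_unit)
  (gen_closure_connected X_unit X1 Xc) hnorm.
  by move=> A /(X_in_closure X_unit) /h.
have [a [b [ha hb nab]]] : exists A B, [/\ H A, H B & A *m B <> B *m A] by case: hH.
by case: nab; have [_ e] := clZ _ ((h a).2 ha); apply: e.
Qed.

Definition comm_class (y B : M) := exists h g, [/\ H h, H g & B = mxconj h (mxcomm g y)].

(* comm_class y contains 1 and is connected, as a union of regular images of
   the connected group H all passing through 1. *)
Lemma comm_class1 y : H y -> comm_class y 1%:M.
Proof.
move=> hy; exists 1%:M, 1%:M; split; try exact: H1.
by rewrite mxconj1 mxcomm1 ?unitmx1 ?H_unit // mul1mx mulmx1.
Qed.

Lemma comm_class_connected y : H y -> zconnected (comm_class y).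
Proof.
move=> hy.
pose Xs (s : {h | H h}) B := exists A, H A /\ B = mxconj (sval s) (mxcomm A y).
apply: (@zconnected_ext _ (fun B => exists s, Xs s B)).
  move=> B; split; first by move=> [[h hh] [g [hg ->]]]; exists h, g.
  by move=> [h [g [hh hg ->]]]; exists (exist _ h hh), g.
apply: (@zconnected_union _ _ (exist _ 1%:M H1) Xs 1%:M).
  move=> [h hh]; apply: zconnected_image; [exact: H_unit| |exact: H_connected].
  by rewrite /mxconj /mxcomm; regular_mx_auto.
move=> [h hh]; exists 1%:M; split; first exact: H1.
by rewrite /= mxcomm1 ?unitmx1 ?H_unit ?mxconj_id ?H_unit // mul1mx mulmx1.
Qed.

(* For y non-central, the conjugates of the commutators [g, y] generate H:
   they form a connected conjugation-stable set, so their closed subgroup is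
   a connected closed normal subgroup, and it is not {1} as y is not central. *)
Lemma comm_class_generates y : H y -> ~ center H y -> forall K, closed_mxgroup K ->
  (forall B, comm_class y B -> K B) -> forall A, H A -> K A.
Proof.
move=> hy ncy K hK hCK.
have X_unit B : comm_class y B -> B \in unitmx.
  by move=> [h [g [hh hg ->]]]; apply/H_unit/H_conj/H_comm.
have clH : forall A, gen_closure (comm_class y) A -> H A.
  by apply: gen_closure_min H_group _ => B [h [g [hh hg ->]]]; apply/H_conj/H_comm.
have hnorm : normal_in (gen_closure (comm_class y)) H.
  split=> // h A hh.
  apply: gen_closure_conj => //; first exact: H_unit.
  move=> B [k [g [hk hg ->]]]; exists (h *m k), g; split => //; first exact: H_mul.
  by rewrite -/(mxconj h _) mxconj_comp ?H_unit.
have [h|h] := (H_simple (gen_closure_group X_unit)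
  (gen_closure_connected X_unit (comm_class1 hy) (comm_class_connected hy)) hnorm).
  case: ncy; split => // g hg; symmetry; apply: mxcomm_eq1; try exact: H_unit.
  by apply/h/(X_in_closure X_unit); exists 1%:M, g; split; [exact: H1|done|rewrite mxconj1].
by move=> A /h; apply: gen_closure_min.
Qed.

Definition central_comm (y c : M) :=
  H c /\ forall d, H d -> center H (mxcomm c (mxconj d y)).

Section CentralCommutators.
Variable y : M.
Hypothesis hy : H y.

Let conj_y_unit d : H d -> mxconj d y \in unitmx.
Proof. by move=> hd; apply: H_unit; apply: H_conj. Qed.

Lemma central_comm_group : is_mxgroup (central_comm y).
Proof.
split.
- split=> [|d hd]; first exact: H1.
  by rewrite mxcomm1 ?unitmx1 ?conj_y_unit ?mul1mx ?mulmx1 //; exact: center1.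
- by move=> A [/H_unit].
- move=> a b [ha ea] [hb eb]; split=> [|d hd]; first exact: H_mul.
  rewrite mxcomm_mulE ?conj_y_unit ?H_unit //.
  by apply: center_mul; [apply: center_conj => //; apply: eb|apply: ea].
- move=> a [ha ea]; split=> [|d hd]; first exact: H_inv.
  rewrite mxcomm_invE ?conj_y_unit ?H_unit //.
  by apply: center_conj; [exact: H_inv|apply: center_inv; apply: ea].
Qed.

Lemma central_comm_closed : closed_mxgroup (central_comm y).
Proof.
apply: closed_mxgroupP; first exact: central_comm_group.
apply: rclosed_and; first exact: closed_mxgroup_rclosed H_group.
apply: (rclosed_ext (S := fun A =>
  forall s : {d | H d}, center H (mxcomm A (mxconj (sval s) y)))).
  by move=> A _; split=> [h d hd|h [d hd]]; [exact: (h (exist _ d hd))|apply: h].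
apply: rclosed_bigcap => -[d hd] /=.
apply: (rclosed_preimage (S := center H)); last exact: closed_mxgroup_rclosed center_closed.
- by rewrite /mxcomm /mxconj; regular_mx_auto.
- by move=> A uA; rewrite mxcomm_unit ?conj_y_unit.
Qed.

Lemma central_comm_conj h c : H h -> central_comm y c -> central_comm y (mxconj h c).
Proof.
move=> hh [hc ec]; split=> [|d hd]; first exact: H_conj.
have uh := H_unit hh.
have -> : mxcomm (mxconj h c) (mxconj d y) =
    mxconj h (mxcomm c (mxconj (invmx h *m d) y)).
  have hd' : H (invmx h *m d) by apply: H_mul => //; apply: H_inv.
  rewrite mxconj_mxcomm ?conj_y_unit ?H_unit // mxconj_comp ?H_unit //.
  by rewrite mulmxA mulmxV // mul1mx.
by apply: center_conj => //; apply: ec; apply: H_mul => //; apply: H_inv.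
Qed.

(* If some non-central c almost commutes with the class of y, then so does
   every element of H: the conjugates of the commutators [g, c] do. *)
Lemma central_comm_full c : central_comm y c -> ~ center H c ->
  forall A, H A -> central_comm y A.
Proof.
move=> Dc ncc; apply: (comm_class_generates Dc.1 ncc central_comm_closed).
move=> B [h [g [hh hg ->]]]; apply: central_comm_conj => //.
have [_ _ Dmul Dinv] := central_comm_group.
by apply: Dmul; [exact: central_comm_conj|exact: Dinv].
Qed.

(* If y almost commutes with its own class, it commutes with it: the
   commutators [y, d y d^-1] form a connected central set containing 1. *)
Lemma central_comm_self_commute : central_comm y y ->
  forall d, H d -> y *m mxconj d y = mxconj d y *m y.
Proof.
move=> [_ Dy] d hd; apply: mxcomm_eq1; rewrite ?conj_y_unit ?H_unit //.
pose X B := exists e, H e /\ B = mxcomm y (mxconj e y).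
apply: (@center_connected_trivial X); last by exists d.
- by move=> B [e [he ->]]; apply: Dy.
- by exists 1%:M; split; [exact: H1|rewrite mxconj1 mxcomm1 ?H_unit].
apply: zconnected_image; [exact: H_unit| |exact: H_connected].
apply: (@regular_mx_ext _ (fun A =>
  y *m (A *m y *m invmx A) *m invmx y *m (A *m invmx y *m invmx A))).
  by move=> A uA; rewrite /mxcomm -/(mxconj A y) -mxconj_inv ?(H_unit hy).
by regular_mx_auto.
Qed.

(* An element commuting with all its conjugates is central: the centralizer of
   its class is closed and contains all conjugates of the commutators [g, y]. *)
Lemma commuting_class_central :
  (forall d, H d -> y *m mxconj d y = mxconj d y *m y) -> center H y.
Proof.
move=> ycomm; apply: NNPP => ncy.
pose class B := exists e, H e /\ B = mxconj e y.
have class_cent e : H e -> centralizes class (mxconj e y).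
  move=> he; split=> [|_ [d [hd ->]]]; first exact: conj_y_unit.
  have ue := H_unit he; have ud := H_unit hd.
  have /(congr1 (mxconj e)) := ycomm _ (H_mul (H_inv he) hd).
  rewrite (mxconj_mul y (mxconj _ y) ue) (mxconj_mul (mxconj _ y) y ue).
  rewrite mxconj_comp ?unitmx_mul ?unitmx_inv ?ue ?ud //.
  by rewrite (mulmxA e) mulmxV // mul1mx.
have [_ _ Kmul Kinv] := (centralizer_closed class).1.
have full := comm_class_generates hy ncy (centralizer_closed class).
apply: ncy; split => // h hh.
have [_ e] : centralizes class h.
  apply: full => // _ [k [g [hk hg ->]]].
  have uk := H_unit hk; have ug := H_unit hg; have uy := H_unit hy.
  have -> : mxconj k (mxcomm g y) = mxconj (k *m g) y *m invmx (mxconj k y).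
    by rewrite /mxcomm -/(mxconj g y) mxconj_mul ?mxconj_comp ?mxconj_inv.
  by apply: Kmul; [apply/class_cent/H_mul|apply/Kinv/class_cent].
by have := e y (ex_intro _ 1%:M (conj H1 (esym (mxconj1 y)))).
Qed.

End CentralCommutators.

Lemma central_comm_center y c : H y -> ~ center H y -> central_comm y c -> center H c.
Proof.
move=> hy ncy Dc; apply: NNPP => ncc; apply: ncy.
apply/commuting_class_central/central_comm_self_commute => //.
exact: (central_comm_full hy Dc ncc).
Qed.

End SimpleGroup.

Lemma tuple_conj_poly n r (d : 'M[F]_n) j : exists g, pf g /\
  forall w : 'I_r -> 'M[F]_n, tup_coord (fun k => mxconj d (w k)) j = g (tup_coord w).
Proof.
case: j => k [a b].
exists (fun v => \sum_l (\sum_m d a m * v (k, (m, l))) * invmx d l b); split.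
  apply: polyfun_sum => l; apply: pf_mul; last exact: pf_const.
  by apply: polyfun_sum => m; apply: pf_mul; [exact: pf_const|exact: pf_var].
by move=> w; rewrite /tup_coord /mxconj /= mxE; apply: eq_bigr => l _; rewrite mxE.
Qed.

Section ProductGroup.
Variables (n r : nat) (H : 'M[F]_n -> Prop).
Hypothesis hH : simple_alg_group H.
Variable x : 'I_r -> 'M[F]_n.
Hypothesis hx : prodH H x.

Local Notation L := (Lr H x).
Local Notation tup := ('I_r -> 'M[F]_n).

Lemma Lr_eq (f g : tup) : f =1 g -> L g -> L f.
Proof. by move=> /functional_extensionality ->. Qed.

Lemma prodH_closed_subgroup : closed_subgroup_prod H (@prodH _ _ r H).
Proof.
split=> [k|a b ha hb k|a ha k|]; first exact: H1 hH.
- exact: H_mul.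
- exact: H_inv.
by exists (fun _ => True); split; [exact: zclosed_setT|move=> z; split => // -[]].
Qed.

Lemma closed_subgroup_prodH (K : tup -> Prop) :
  closed_subgroup_prod H K -> forall z, K z -> prodH H z.
Proof. by move=> [_ _ _ [Z [_ e]]] z /e[]. Qed.

Lemma Lr_prodH z : L z -> prodH H z.
Proof.
move=> hz; apply: hz; first exact: prodH_closed_subgroup.
by move=> w [d [hd e]] k; rewrite e; apply: H_conj.
Qed.

Lemma Lr_x : L x.
Proof. by move=> K _; apply; exists 1%:M; split=> [|k]; [exact: H1|rewrite -/(mxconj _ _) mxconj1]. Qed.

Lemma Lr_1 : L (fun _ => 1%:M).
Proof. by move=> K []. Qed.

Lemma Lr_mul a b : L a -> L b -> L (fun k => a k *m b k).
Proof. by move=> ha hb K hK hG; case: (hK) => _ hm _ _; apply: hm; [apply: ha|apply: hb]. Qed.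

Lemma Lr_inv a : L a -> L (fun k => invmx (a k)).
Proof. by move=> ha K hK hG; case: (hK) => _ _ hv _; apply: hv; apply: ha. Qed.

Lemma closed_subgroup_prod_conj (K : tup -> Prop) d : H d ->
  closed_subgroup_prod H K -> closed_subgroup_prod H (fun w => K (fun k => mxconj d (w k))).
Proof.
move=> hd hK; have ud := H_unit hH hd; have Kp := closed_subgroup_prodH hK.
have Keq g f : K g -> f =1 g -> K f by move=> Kg /functional_extensionality ->.
case: hK => K1 Kmul Kinv [Z [hZ eK]]; split.
- by apply: (Keq _ _ K1) => k; rewrite mxconj_id.
- by move=> a b ha hb; apply: (Keq _ _ (Kmul _ _ ha hb)) => k; rewrite mxconj_mul.
- move=> a ha; apply: (Keq _ _ (Kinv _ ha)) => k; rewrite mxconj_inv //.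
  by rewrite -(mxconj_unit _ ud); apply: (H_unit hH); apply: (Kp _ ha).
have [Z' [hZ' e']] := zclosed_preimage (tuple_conj_poly d) hZ.
exists Z'; split => // w; rewrite eK e'.
suff -> : prodH H (fun k => mxconj d (w k)) <-> prodH H w by [].
split => hw k; last exact: H_conj.
by rewrite -(mxconjK (w k) ud); apply: (H_conj hH); [apply: (H_inv hH)|apply: hw].
Qed.

Lemma Lr_conj d z : H d -> L z -> L (fun k => mxconj d (z k)).
Proof.
move=> hd hz K hK hG; apply: (hz (fun w => K (fun k => mxconj d (w k)))).
  exact: closed_subgroup_prod_conj.
move=> w [e [he ew]]; apply: hG; exists (d *m e); split; first exact: (H_mul hH).
move=> k; rewrite ew -!/(mxconj _ _) mxconj_comp //; exact: (H_unit hH).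
Qed.

Lemma Lr_closed : exists Z, zclosed (@tup_coord F r n) Z /\
  forall z, L z <-> Z z /\ prodH H z.
Proof.
pose Idx := {p : (tup -> Prop) * (tup -> Prop) | [/\ closed_subgroup_prod H p.1,
  (forall z, Gamma H x z -> p.1 z), zclosed (@tup_coord F r n) p.2 &
  forall z, p.1 z <-> p.2 z /\ prodH H z]}.
exists (fun z => forall s : Idx, (sval s).2 z); split.
  by apply: (@zclosed_bigcap _ _ _ Idx (fun s => (sval s).2)) => s; case: (proj2_sig s).
move=> z; split.
  move=> hz; split; last exact: Lr_prodH.
  by move=> [[K Z] [hK hG hZ e]] /=; have /e[] := hz K hK hG.
move=> [hz hp] K hK hG; have [_ _ _ [Z [hZ e]]] := hK.
by apply/e; split => //; exact: (hz (exist _ (K, Z) (And4 hK hG hZ e))).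
Qed.

Definition embed (i : 'I_r) (h : 'M[F]_n) : tup := fun k => if k == i then h else 1%:M.

Lemma embed_conj i d h : H d -> embed i (mxconj d h) =1 (fun k => mxconj d (embed i h k)).
Proof. by move=> hd k; rewrite /embed; case: ifP => // _; rewrite mxconj_id ?(H_unit hH). Qed.

Lemma slice_closed i : closed_mxgroup (fun h => L (embed i h)).
Proof.
apply: closed_mxgroupP.
  split.
  - by apply: (Lr_eq _ Lr_1) => k; rewrite /embed; case: ifP.
  - by move=> A /Lr_prodH /(_ i); rewrite /embed eqxx; exact: (H_unit hH).
  - move=> A B hA hB; apply: (Lr_eq _ (Lr_mul hA hB)).
    by move=> k; rewrite /embed; case: ifP => // _; rewrite mulmx1.
  - move=> A hA; apply: (Lr_eq _ (Lr_inv hA)).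
    by move=> k; rewrite /embed; case: ifP => // _; rewrite invmx1.
have [Z [hZ e]] := Lr_closed.
have embed_poly j : exists g, pf g /\ forall h : 'M[F]_n,
    tup_coord (embed i h) j = g (mx_coord h).
  case: j => k [a b]; rewrite /tup_coord /embed /=; case: (k == i).
    by exists (fun v => v (a, b)); split => //; exact: pf_var.
  by exists (fun _ => (1%:M : 'M[F]_n) a b); split => //; exact: pf_const.
have [Z' [hZ' e']] := zclosed_preimage embed_poly hZ.
apply: (rclosed_ext (S := fun h => Z' h /\ H h)).
  move=> A uA; rewrite e -e'; split=> [[h1 h2]|[h1 h2]]; split => //.
    by move=> k; rewrite /embed; case: ifP => _ //; exact: (H1 hH).
  by have := h2 i; rewrite /embed eqxx.
by apply: rclosed_and; [exists Z'|exact: closed_mxgroup_rclosed (H_group hH)].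
Qed.

Hypothesis hxZ : forall i, ~ center H (x i).
Hypothesis hxx : forall i j, i <> j -> ~ center H (x i *m invmx (x j)).

Definition witness (i : 'I_r) (S : {set 'I_r}) := exists l, [/\ L l,
  (forall k, k \notin S -> center H (l k)) & ~ center H (l i)].

Lemma witness_sub i (S S' : {set 'I_r}) : S \subset S' -> witness i S -> witness i S'.
Proof.
move=> sSS' [l [hl lS nli]]; exists l; split => // k kS'; apply: lS.
by apply: contra kS'; apply: (subsetP sSS').
Qed.

Definition twist (j : 'I_r) (m : tup) : tup :=
  fun k => mxconj (x k) (m k) *m invmx (mxconj (x j) (m k)).

Lemma Lr_twist j m : L m -> L (twist j m).
Proof.
move=> hm; apply: Lr_mul; last exact: Lr_inv (Lr_conj (hx j) hm).
exact: Lr_mul (Lr_mul Lr_x hm) (Lr_inv Lr_x).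
Qed.

Lemma twist_central j m k : center H (m k) -> center H (twist j m k).
Proof.
move=> mk; apply: (center_mul hH); first exact: center_conj.
by apply/(center_inv hH)/center_conj.
Qed.

Lemma twist_at j m : H (m j) -> twist j m j = 1%:M.
Proof. by move=> hmj; rewrite /twist mulmxV // mxconj_unit ?(H_unit hH (hx j)) ?(H_unit hH hmj). Qed.

Lemma twist_comm i j m : H (m i) ->
  mxcomm (invmx (x j) *m x i) (m i) = mxconj (invmx (x j)) (twist j m i).
Proof.
move=> hmi; have uj := H_unit hH (hx j); have ui := H_unit hH (hx i).
have um := H_unit hH hmi.
rewrite /mxcomm /mxconj /twist !invmxM ?unitmx_mul ?unitmx_inv ?uj ?ui ?um //.
by rewrite !invmxK !mulmxA (mulmxKV uj).
Qed.

(* Otherwise every element of L_r central outside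
   S and at j would be central at i; applied to twists of conjugates of the
   witness, this makes x_j^-1 x_i almost commute with the class of the
   witness at i, hence central, contradicting the hypothesis on x_i x_j^-1. *)
Lemma witness_shrink i j (S : {set 'I_r}) : i != j -> j \in S -> witness i S -> witness i (S :\ j).
Proof.
move=> nij jS [l [hl lS nli]]; apply: NNPP => nw.
have central_at_i m : L m -> (forall k, k \notin S -> center H (m k)) ->
    center H (m j) -> center H (m i).
  move=> hm mS mj; apply: NNPP => nmi; apply: nw; exists m; split => // k.
  by rewrite in_setD1 negb_and negbK => /orP[/eqP->|]; last exact: mS.
have hxj := H_inv hH (hx j).
have cc : center H (invmx (x j) *m x i).
  apply: (central_comm_center hH (Lr_prodH hl i) nli); split=> [|d hd].
    exact: H_mul.
  pose m k := mxconj d (l k).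
  have hm : L m by apply: Lr_conj.
  have mS k : k \notin S -> center H (m k) by move/lS; apply: center_conj.
  rewrite -/(m i) twist_comm; last exact: H_conj (Lr_prodH hl i).
  apply: center_conj => //; apply: central_at_i; first exact: Lr_twist.
    by move=> k /mS; apply: twist_central.
  by rewrite twist_at; [exact: center1|exact: (Lr_prodH hm j)].
apply: (hxx (i := i) (j := j)); first exact/eqP.
rewrite -[x i](mulKVmx (H_unit hH (hx j))).
exact: (center_conj hH (hx j) cc).
Qed.

(* Shrinking the support of the witness x itself down to {i}. *)
Lemma witness_single i : witness i [set i].
Proof.
suff shrink m (S : {set 'I_r}) : (#|S| <= m)%N -> witness i S -> witness i [set i].
  apply: (shrink #|[set: 'I_r]| [set: 'I_r] (leqnn _)).
  by exists x; split=> [|k|]; [exact: Lr_x|rewrite in_setT|exact: hxZ].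
elim: m S => [|m IH] S hS wS.
  by apply: witness_sub wS; move: hS; rewrite leqn0 cards_eq0 => /eqP ->; exact: sub0set.
case: (pickP (fun j => (j \in S) && (j != i))) => [j /andP[jS nji]|none].
  apply: (IH (S :\ j)); last by apply: witness_shrink; rewrite // eq_sym.
  by move: hS; rewrite (cardsD1 j) jS add1n ltnS.
apply: witness_sub wS; apply/subsetP => k kS; rewrite in_set1.
by apply: contraFT (none k) => nki; rewrite kS.
Qed.

(* Each slice is all of H: it is a closed subgroup containing the conjugates
   of the commutators [g, w_i] for a witness w supported on {i}. *)
Lemma slice_full i h : H h -> L (embed i h).
Proof.
have [w [hw wS nwi]] := witness_single i.
apply: (comm_class_generates hH (Lr_prodH hw i) nwi (slice_closed i)).
move=> _ [d [g [hd hg ->]]]; apply: Lr_eq (embed_conj i _ hd) _; apply: Lr_conj => //.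
apply: (Lr_eq (g := fun k => mxconj g (w k) *m invmx (w k))).
  move=> k; rewrite /embed; case: ifP => [/eqP -> //|/negbT nki].
  have wk : center H (w k) by apply: wS; rewrite in_set1.
  by rewrite (center_conj_fixed hH hg wk) mulmxV // (H_unit hH (center_in wk)).
by apply: Lr_mul; [exact: Lr_conj|exact: Lr_inv].
Qed.

(* Every element of H[r] is a product of elements of the slices. *)
Lemma Lr_full z : prodH H z -> L z.
Proof.
move=> hz; suff partial (s : seq 'I_r) : L (fun k => if k \in s then z k else 1%:M).
  by apply: (Lr_eq _ (partial (enum 'I_r))) => k; rewrite mem_enum.
elim: s => [|a s IH]; first by apply: (Lr_eq _ Lr_1) => k; rewrite in_nil.
have [as_|nas] := boolP (a \in s).
  by apply: (Lr_eq _ IH) => k; rewrite in_cons; case: eqP => [->|_] /=; rewrite ?as_.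
apply: (Lr_eq _ (Lr_mul (@slice_full a (z a) (hz a)) IH)) => k.
rewrite /embed in_cons; case: eqP => [->|_] /=; last by rewrite mul1mx.
by rewrite (negbTE nas) mulmx1.
Qed.

End ProductGroup.
End LinearAlgebraicGroups.

Theorem lemma3p2 (F : closedFieldType) (hF : [pchar F] =i pred0)
  (n r : nat) (H : 'M[F]_n -> Prop) (hH : simple_alg_group H)
  (x : 'I_r -> 'M[F]_n) (hx : prodH H x)
  (hxZ : forall i, ~ center H (x i))
  (hxx : forall i j, i <> j -> ~ center H (x i *m invmx (x j))) :
  forall z, Lr H x z <-> prodH H z.
Proof.
move=> z; split; first exact: Lr_prodH.
exact: Lr_full hxZ hxx z.
Qed.
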